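(* Let $\rho\ge1$, $t\in[-1,1]$, $\lambda=\alpha+i\beta$ with $\alpha,\beta\in\mathbb{R}$, and let $\psi=\psi_0+2\sum_{k=1}^K\psi_kT_k$ with $\psi_0,\dots,\psi_K\in\mathbb{C}$. Then $$\sup_{z\in\mathcal{E}_\rho}\Big|\frac{t+1}{2}\exp\Big(\frac{\lambda}{2}(t+1)(1-z)\Big)\psi\Big(\frac{t+1}{2}(z+1)-1\Big)\Big|\le\frac{t+1}{2}\exp\Big(\alpha+\tfrac12\sqrt{\alpha^2(\rho+\rho^{-1})^2+\beta^2(\rho-\rho^{-1})^2}\Big)\Big(|\psi_0|+\sum_{k=1}^K|\psi_k|(\rho^k+\rho^{-k})\Big).$$
   Context: $T_k$ is the Chebyshev polynomial of the first kind, $T_k(\cos\theta)=\cos(k\theta)$, extended to $\mathbb{C}$ as a polynomial. For $\rho\ge1$, $\mathcal{E}_\rho=\{z\in\mathbb{C}:|z-1|+|z+1|<\rho+\rho^{-1}\}$ is the open Bernstein ellipse. *)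

From Stdlib Require Import Reals.
From Coquelicot Require Import Coquelicot.
Open Scope R_scope.

Definition cexp (z : C) : C :=
  (exp (fst z) * cos (snd z), exp (fst z) * sin (snd z)).

(* Chebyshev polynomials of the first kind, evaluated on C, via the
   standard three-term recurrence T_0 = 1, T_1 = z, T_{k+2} = 2 z T_{k+1} - T_k
   (this is the unique polynomial with T_k(cos th) = cos(k th)). *)
Fixpoint chebT (k : nat) (z : C) : C :=
  match k with
  | O => RtoC 1
  | S O => z
  | S (S m as p) => Cminus (Cmult (Cmult (RtoC 2) z) (chebT p z)) (chebT m z)
  end.

(* csum f n = f 1 + ... + f n (0 if n = 0). *)
Fixpoint csum (f : nat -> C) (n : nat) : C :=
  match n with O => RtoC 0 | S m => Cplus (csum f m) (f (S m)) end.

Fixpoint rsum (f : nat -> R) (n : nat) : R :=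
  match n with O => 0 | S m => rsum f m + f (S m) end.

Definition cheb_series (psi : nat -> C) (K : nat) (w : C) : C :=
  Cplus (psi O) (Cmult (RtoC 2) (csum (fun k => Cmult (psi k) (chebT k w)) K)).

Definition bernstein_ellipse (rho : R) (z : C) : Prop :=
  Cmod (Cminus z (RtoC 1)) + Cmod (Cplus z (RtoC 1)) < rho + / rho.

(* Write A(z) = (|z-1| + |z+1|)/2 for the semi-major axis of the ellipse with
   foci -1, 1 through z, so that z lies in E_rho iff A(z) < (rho + 1/rho)/2.
   Such a z is A c + i sqrt(A^2-1) s with c^2 + s^2 = 1.  The proof has three
   independent estimates, combined multiplicatively at the end:
   - Chebyshev factor: with r = A + sqrt(A^2-1), the point w is the Joukowski
     image (u + 1/u)/2 of some u with |u| = r, hence 2 T_k(w) = u^k + u^-k and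
     |T_k(w)| <= (r^k + r^-k)/2 <= (rho^k + rho^-k)/2, because x + 1/x is
     increasing on [1, oo).  The affine map z |-> s(z+1) - 1 with
     s = (t+1)/2 in [0,1] keeps the closed ellipse, so this applies to w.
   - Exponential factor: |exp(q)| = exp(Re q) and, by Cauchy-Schwarz on the
     parametrisation, -Re(lambda z) <= sqrt(alpha^2 A^2 + beta^2 (A^2-1)),
     which is at most half the square root appearing in the statement.
   - The prefactor (t+1)/2 is a nonnegative real. *)
From Stdlib Require Import Reals Lra Psatz.
From Coquelicot Require Import Coquelicot.
Open Scope R_scope.

Lemma add_inv_le_iff (p q : R) :
  1 <= p -> 1 <= q -> (p <= q <-> p + / p <= q + / q).
Proof.
  intros hp hq.
  assert (diff : (q + / q) - (p + / p) = (q - p) * (1 - / (p * q)))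
    by (field; lra).
  assert (hpq : 1 <= p * q) by nra.
  assert (hinv : / (p * q) <= 1)
    by (rewrite <- Rinv_1; apply Rinv_le_contravar; lra).
  split; intro h.
  - assert (0 <= (q - p) * (1 - / (p * q))) by (apply Rmult_le_pos; lra).
    lra.
  - destruct (Rle_lt_dec p q) as [hle | hlt]; [exact hle |].
    assert (hinv' : / (p * q) < 1)
      by (rewrite <- Rinv_1; apply Rinv_lt_contravar; nra).
    assert ((q - p) * (1 - / (p * q)) < 0)
      by (apply Rmult_neg_pos; lra).
    lra.
Qed.

Lemma abs_le_sqrt (x Y : R) : x ^ 2 <= Y -> Rabs x <= sqrt Y.
Proof.
  intro h. rewrite <- sqrt_Rsqr_abs. apply sqrt_le_1_alt.
  unfold Rsqr. lra.
Qed.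

Lemma sum_sq_nonneg (a b : R) : 0 <= a ^ 2 + b ^ 2.
Proof. apply Rplus_le_le_0_compat; apply pow2_ge_0. Qed.

Definition semi_axis (z : C) : R :=
  (Cmod (Cminus z (RtoC 1)) + Cmod (Cplus z (RtoC 1))) / 2.

(* Real form of the focal relations: if d1, d2 are the distances from
   (x, y) to the foci, A = (d1 + d2)/2 satisfies the ellipse equation
   x^2/A^2 + y^2/(A^2-1) = 1, written without denominators. *)
Lemma focal_distances (x y d1 d2 : R) :
  0 <= d1 -> 0 <= d2 -> d1 * d1 = (x - 1) ^ 2 + y ^ 2 ->
  d2 * d2 = (x + 1) ^ 2 + y ^ 2 ->
  1 <= (d1 + d2) / 2 /\ x ^ 2 <= ((d1 + d2) / 2) ^ 2 /\
  y ^ 2 * ((d1 + d2) / 2) ^ 2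
    = (((d1 + d2) / 2) ^ 2 - 1) * (((d1 + d2) / 2) ^ 2 - x ^ 2).
Proof.
  intros h1 h2 e1 e2.
  set (A := (d1 + d2) / 2). set (e := d2 - d1).
  assert (g1 : d1 >= 1 - x) by nra.
  assert (g2 : d2 >= 1 + x) by nra.
  assert (g3 : d2 <= d1 + 2) by nra.
  assert (g4 : d1 <= d2 + 2) by nra.
  assert (hA : 1 <= A) by (unfold A; lra).
  assert (he : A * e = 2 * x) by (unfold A, e; nra).
  assert (he2 : e ^ 2 <= 4) by (unfold e; nra).
  assert (hd2 : d2 = A + e / 2) by (unfold A, e; lra).
  assert (hy : y ^ 2 = A ^ 2 + e ^ 2 / 4 - x ^ 2 - 1)
    by (rewrite hd2 in e2; nra).
  assert (hx : e ^ 2 * A ^ 2 = 4 * x ^ 2)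
    by (replace (e ^ 2 * A ^ 2) with ((A * e) ^ 2) by ring; rewrite he; ring).
  split; [exact hA | split]; [nra | rewrite hy; nra].
Qed.

Lemma semi_axis_param (z : C) :
  1 <= semi_axis z /\
  exists c s, c ^ 2 + s ^ 2 = 1 /\ fst z = semi_axis z * c /\
              snd z = sqrt (semi_axis z ^ 2 - 1) * s.
Proof.
  destruct z as [x y].
  assert (Hm : Cmod (Cminus (x, y) (RtoC 1)) = sqrt ((x - 1) ^ 2 + y ^ 2))
    by (unfold Cmod; simpl; f_equal; ring).
  assert (Hp : Cmod (Cplus (x, y) (RtoC 1)) = sqrt ((x + 1) ^ 2 + y ^ 2))
    by (unfold Cmod; simpl; f_equal; ring).
  unfold semi_axis. rewrite Hm, Hp. simpl fst; simpl snd.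
  set (d1 := sqrt ((x - 1) ^ 2 + y ^ 2)).
  set (d2 := sqrt ((x + 1) ^ 2 + y ^ 2)).
  assert (q1 : d1 * d1 = (x - 1) ^ 2 + y ^ 2) 
    by (unfold d1; apply sqrt_sqrt; apply sum_sq_nonneg).
  assert (q2 : d2 * d2 = (x + 1) ^ 2 + y ^ 2) 
    by (unfold d2; apply sqrt_sqrt; apply sum_sq_nonneg).
  destruct (focal_distances x y d1 d2 (sqrt_pos _) (sqrt_pos _) q1 q2)
    as [hA [hx hy]].
  set (A := (d1 + d2) / 2) in *. set (B := sqrt (A ^ 2 - 1)).
  assert (hB2 : B * B = A ^ 2 - 1) by (unfold B; apply sqrt_sqrt; nra).
  split; [exact hA |]. exists (x / A).
  destruct (Req_dec B 0) as [hB | hB].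
  - (* degenerate ellipse: the segment [-1, 1] *)
    assert (hy0 : y = 0) by (rewrite hB in hB2; nra).
    assert (hc : (x / A) ^ 2 <= 1).
    { replace ((x / A) ^ 2) with (x ^ 2 / A ^ 2) by (field; lra).
      apply Rmult_le_reg_r with (A ^ 2); [nra |].
      unfold Rdiv. rewrite Rmult_assoc, Rinv_l by nra. nra. }
    exists (sqrt (1 - (x / A) ^ 2)).
    split; [rewrite pow2_sqrt by lra; ring | split; [field; lra |]].
    rewrite hB, hy0. ring.
  - exists (y / B). split; [| split; field; lra].
    replace ((x / A) ^ 2 + (y / B) ^ 2)
      with ((x ^ 2 * (B * B) + y ^ 2 * A ^ 2) / (A ^ 2 * (B * B)))
      by (field; lra).
    rewrite hy, hB2. field. split; nra.
Qed.

Lemma semi_axis_affine (z : C) (s : R) :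
  0 <= s <= 1 ->
  semi_axis (Cminus (Cmult (RtoC s) (Cplus z (RtoC 1))) (RtoC 1))
    <= s * semi_axis z + (1 - s).
Proof.
  intro hs. unfold semi_axis.
  set (w := Cminus (Cmult (RtoC s) (Cplus z (RtoC 1))) (RtoC 1)).
  assert (ep : Cplus w (RtoC 1) = Cmult (RtoC s) (Cplus z (RtoC 1)))
    by (unfold w; ring).
  assert (em : Cminus w (RtoC 1)
               = Cplus (Cmult (RtoC s) (Cminus z (RtoC 1)))
                       (RtoC (2 * (s - 1)))).
  { unfold w. destruct z. apply injective_projections; simpl; ring. }
  rewrite ep, em.
  pose proof (Cmod_triangle (Cmult (RtoC s) (Cminus z (RtoC 1)))
                            (RtoC (2 * (s - 1)))) as tri.
  rewrite !Cmod_mult, !Cmod_R, Rabs_pos_eq in * by lra.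
  rewrite (Rabs_left1 (2 * (s - 1))) in tri by lra.
  lra.
Qed.

Lemma chebT_joukowski (u v w : C) :
  Cplus u v = Cmult (RtoC 2) w -> Cmult u v = RtoC 1 ->
  forall k, Cmult (RtoC 2) (chebT k w) = Cplus (Cpow u k) (Cpow v k).
Proof.
  intros huv hm.
  assert (pair : forall k,
    Cmult (RtoC 2) (chebT k w) = Cplus (Cpow u k) (Cpow v k) /\
    Cmult (RtoC 2) (chebT (S k) w) = Cplus (Cpow u (S k)) (Cpow v (S k))).
  { induction k as [| k [IH0 IH1]].
    - split; [apply injective_projections; simpl; ring |].
      simpl chebT. rewrite !Cpow_1_r. symmetry; exact huv.
    - split; [exact IH1 |].
      change (chebT (S (S k)) w)
        with (Cminus (Cmult (Cmult (RtoC 2) w) (chebT (S k) w)) (chebT k w)).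
      replace (Cmult (RtoC 2) (Cminus (Cmult (Cmult (RtoC 2) w) (chebT (S k) w))
                                      (chebT k w)))
        with (Cminus (Cmult (Cmult (RtoC 2) w) (Cmult (RtoC 2) (chebT (S k) w)))
                     (Cmult (RtoC 2) (chebT k w))) by ring.
      rewrite IH0, IH1, <- huv. simpl.
      replace (Cminus (Cmult (Cplus u v)
                        (Cplus (Cmult u (Cpow u k)) (Cmult v (Cpow v k))))
                      (Cplus (Cpow u k) (Cpow v k)))
        with (Cplus (Cplus (Cmult u (Cmult u (Cpow u k)))
                           (Cmult v (Cmult v (Cpow v k))))
                    (Cmult (Cminus (Cmult u v) (RtoC 1))
                           (Cplus (Cpow u k) (Cpow v k)))) by ring.
      rewrite hm. apply injective_projections; simpl; ring. }
  intro k. apply pair.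
Qed.

Definition joukowski_radius (A : R) : R := A + sqrt (A ^ 2 - 1).

Lemma joukowski_radius_spec (A : R) :
  1 <= A ->
  1 <= joukowski_radius A /\ / joukowski_radius A = A - sqrt (A ^ 2 - 1).
Proof.
  intro hA. unfold joukowski_radius.
  assert (hB2 : sqrt (A ^ 2 - 1) * sqrt (A ^ 2 - 1) = A ^ 2 - 1)
    by (apply sqrt_sqrt; nra).
  pose proof (sqrt_pos (A ^ 2 - 1)).
  split; [lra |]. field_simplify_eq; [nra | nra].
Qed.

Lemma joukowski_preimage (w : C) :
  exists u v : C, Cplus u v = Cmult (RtoC 2) w /\ Cmult u v = RtoC 1 /\
    Cmod u = joukowski_radius (semi_axis w) /\
    Cmod v = / joukowski_radius (semi_axis w).
Proof.
  destruct (semi_axis_param w) as [hA [c [s [hcs [hx hy]]]]].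
  destruct (joukowski_radius_spec _ hA) as [hr hinv].
  set (A := semi_axis w) in *. set (B := sqrt (A ^ 2 - 1)) in *.
  set (r := joukowski_radius A) in *.
  assert (hB2 : B * B = A ^ 2 - 1) by (apply sqrt_sqrt; nra).
  assert (hrB : r = A + B) by reflexivity.
  clearbody r B A.
  assert (hBA : B < A) by nra.
  exists (r * c, r * s), ((A - B) * c, - ((A - B) * s)).
  assert (mod_polar : forall m, 0 <= m -> Cmod (m * c, m * s) = m).
  { intros m hm. unfold Cmod; simpl fst; simpl snd.
    replace ((m * c) ^ 2 + (m * s) ^ 2) with (m ^ 2 * (c ^ 2 + s ^ 2)) by ring.
    rewrite hcs, Rmult_1_r. apply sqrt_pow2; exact hm. }
  destruct w as [x y]; simpl in hx, hy.
  split; [| split; [| split]].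
  - unfold Cplus, Cmult, RtoC.
    apply injective_projections; simpl; rewrite hx, hy, hrB; ring.
  - unfold Cmult, RtoC. apply injective_projections; simpl; rewrite hrB; nra.
  - apply mod_polar; lra.
  - rewrite hinv. transitivity (Cmod ((A - B) * c, (A - B) * s)).
    + unfold Cmod; simpl fst; simpl snd; f_equal; ring.
    + apply mod_polar; lra.
Qed.

Lemma chebT_bernstein_bound (w : C) (rho : R) (k : nat) :
  1 <= rho -> semi_axis w <= (rho + / rho) / 2 ->
  Cmod (chebT k w) <= (rho ^ k + / rho ^ k) / 2.
Proof.
  intros hrho hw.
  destruct (semi_axis_param w) as [hA _].
  destruct (joukowski_radius_spec _ hA) as [hr hinv].
  set (r := joukowski_radius (semi_axis w)) in *.
  assert (hrrho : r <= rho).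
  { apply add_inv_le_iff; auto. rewrite hinv. unfold r, joukowski_radius. lra. }
  destruct (joukowski_preimage w) as [u [v [huv [hm [hu hv]]]]].
  assert (half : Cmod (chebT k w) = Cmod (Cplus (Cpow u k) (Cpow v k)) / 2).
  { rewrite <- (chebT_joukowski u v w huv hm k), Cmod_mult, Cmod_R,
      Rabs_pos_eq by lra. field. }
  rewrite half. apply Rmult_le_compat_r; [lra |].
  eapply Rle_trans; [apply Cmod_triangle |].
  rewrite !Cmod_pow, hu, hv, pow_inv. fold r.
  apply (add_inv_le_iff (r ^ k) (rho ^ k)); try (apply pow_R1_Rle; lra).
  apply pow_incr; lra.
Qed.

Lemma cheb_series_bound (psi : nat -> C) (K : nat) (w : C) (rho : R) :
  (forall k, Cmod (chebT k w) <= (rho ^ k + / rho ^ k) / 2) ->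
  Cmod (cheb_series psi K w)
    <= Cmod (psi O) + rsum (fun k => Cmod (psi k) * (rho ^ k + / rho ^ k)) K.
Proof.
  intro hT.
  assert (hsum : Cmod (csum (fun k => Cmult (psi k) (chebT k w)) K)
                 <= rsum (fun k => Cmod (psi k) * (rho ^ k + / rho ^ k)) K / 2).
  { induction K as [| K IH]; simpl.
    - rewrite Cmod_R, Rabs_R0. lra.
    - eapply Rle_trans; [apply Cmod_triangle |].
      rewrite Cmod_mult.
      pose proof (Rmult_le_compat_l _ _ _ (Cmod_ge_0 (psi (S K))) (hT (S K))).
      simpl in *. lra. }
  unfold cheb_series. eapply Rle_trans; [apply Cmod_triangle |].
  rewrite Cmod_mult, Cmod_R, Rabs_pos_eq by lra. lra.
Qed.

Lemma Cmod_cexp (q : C) : Cmod (cexp q) = exp (fst q).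
Proof.
  unfold Cmod, cexp; simpl fst; simpl snd.
  replace ((exp (fst q) * cos (snd q)) ^ 2 + (exp (fst q) * sin (snd q)) ^ 2)
    with (exp (fst q) ^ 2 * (Rsqr (sin (snd q)) + Rsqr (cos (snd q))))
    by (unfold Rsqr; ring).
  rewrite sin2_cos2, Rmult_1_r. apply sqrt_pow2. left; apply exp_pos.
Qed.

(* Cauchy-Schwarz on elliptic coordinates: |Re((alpha + i beta) z)| is at
   most sqrt(alpha^2 A^2 + beta^2 (A^2-1)) with A the semi-axis of z. *)
Lemma re_mult_semi_axis_bound (alpha beta : R) (z : C) :
  Rabs (alpha * fst z - beta * snd z)
    <= sqrt (alpha ^ 2 * semi_axis z ^ 2 + beta ^ 2 * (semi_axis z ^ 2 - 1)).
Proof.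
  destruct (semi_axis_param z) as [hA [c [s [hcs [hx hy]]]]].
  rewrite hx, hy. apply abs_le_sqrt.
  set (A := semi_axis z) in *. set (B := sqrt (A ^ 2 - 1)).
  assert (hB2 : B ^ 2 = A ^ 2 - 1) by (apply pow2_sqrt; nra).
  rewrite <- hB2.
  assert (lagrange : (alpha ^ 2 * A ^ 2 + beta ^ 2 * B ^ 2) * (c ^ 2 + s ^ 2)
                     - (alpha * (A * c) - beta * (B * s)) ^ 2
                     = (alpha * A * s + beta * B * c) ^ 2) by ring.
  rewrite hcs in lagrange.
  pose proof (pow2_ge_0 (alpha * A * s + beta * B * c)). lra.
Qed.

(* The quadratic form above is increasing in A and equals a quarter of the
   radicand of the statement at A = (rho + 1/rho)/2. *)
Lemma semi_axis_radicand_bound (alpha beta A rho : R) :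
  1 <= rho -> 1 <= A <= (rho + / rho) / 2 ->
  4 * (alpha ^ 2 * A ^ 2 + beta ^ 2 * (A ^ 2 - 1))
    <= alpha ^ 2 * (rho + / rho) ^ 2 + beta ^ 2 * (rho - / rho) ^ 2.
Proof.
  intros hrho hA.
  assert (hinv : rho * / rho = 1) by (field; lra).
  assert (hsq : A ^ 2 <= ((rho + / rho) / 2) ^ 2) by (apply pow_incr; lra).
  assert (hfoc : ((rho + / rho) / 2) ^ 2 - 1 = ((rho - / rho) / 2) ^ 2) by nra.
  pose proof (pow2_ge_0 alpha). pose proof (pow2_ge_0 beta).
  nra.
Qed.

Lemma exponent_bound (z : C) (rho s alpha beta : R) :
  1 <= rho -> 0 <= s <= 1 -> semi_axis z <= (rho + / rho) / 2 ->
  s * (alpha - (alpha * fst z - beta * snd z))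
    <= alpha + / 2 * sqrt (alpha ^ 2 * (rho + / rho) ^ 2
                           + beta ^ 2 * (rho - / rho) ^ 2).
Proof.
  intros hrho hs hz.
  destruct (semi_axis_param z) as [hA _].
  set (A := semi_axis z) in *.
  set (Y := alpha ^ 2 * A ^ 2 + beta ^ 2 * (A ^ 2 - 1)).
  set (X := alpha ^ 2 * (rho + / rho) ^ 2 + beta ^ 2 * (rho - / rho) ^ 2).
  assert (hYalpha : alpha ^ 2 <= Y).
  { assert (0 <= (alpha ^ 2 + beta ^ 2) * (A ^ 2 - 1)).
    { apply Rmult_le_pos; [apply sum_sq_nonneg |].
      pose proof (pow_R1_Rle A 2 hA). lra. }
    unfold Y. lra. }
  pose proof (pow2_ge_0 alpha).
  assert (hre : - (alpha * fst z - beta * snd z) <= sqrt Y).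
  { eapply Rle_trans; [apply Rle_abs |].
    rewrite Rabs_Ropp. apply re_mult_semi_axis_bound. }
  assert (hYX : 2 * sqrt Y <= sqrt X).
  { eapply Rle_trans; [apply Rle_abs | apply abs_le_sqrt].
    replace ((2 * sqrt Y) ^ 2) with (4 * sqrt Y ^ 2) by ring.
    rewrite pow2_sqrt by lra. apply semi_axis_radicand_bound; lra. }
  assert (halpha : - alpha <= sqrt Y).
  { eapply Rle_trans; [apply Rle_abs |].
    rewrite Rabs_Ropp. apply abs_le_sqrt; exact hYalpha. }
  assert (0 <= s * (sqrt Y + (alpha * fst z - beta * snd z)))
    by (apply Rmult_le_pos; lra).
  assert (0 <= (1 - s) * (alpha + sqrt Y)) by (apply Rmult_le_pos; lra).
  lra.
Qed.

Theorem lemmaC3 (rho t alpha beta : R) (K : nat) (psi : nat -> C) :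
  1 <= rho -> -1 <= t <= 1 ->
  forall z : C, bernstein_ellipse rho z ->
  Cmod (Cmult (Cmult (RtoC ((t + 1) / 2))
                     (cexp (Cmult (Cmult (alpha, beta) (RtoC ((t + 1) / 2)))
                                  (Cminus (RtoC 1) z))))
              (cheb_series psi K
                 (Cminus (Cmult (RtoC ((t + 1) / 2)) (Cplus z (RtoC 1))) (RtoC 1))))
  <= (t + 1) / 2
     * exp (alpha + / 2 * sqrt (alpha ^ 2 * (rho + / rho) ^ 2
                                + beta ^ 2 * (rho - / rho) ^ 2))
     * (Cmod (psi O) + rsum (fun k => Cmod (psi k) * (rho ^ k + / rho ^ k)) K).
Proof.
  intros hrho ht z hz.
  set (s := (t + 1) / 2). assert (hs : 0 <= s <= 1) by (unfold s; lra).
  assert (hz' : semi_axis z <= (rho + / rho) / 2)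
    by (unfold semi_axis, bernstein_ellipse in *; lra).
  assert (h2 : 1 + / 1 <= rho + / rho) by (apply (add_inv_le_iff 1 rho); lra).
  rewrite Rinv_1 in h2.
  assert (hw : semi_axis (Cminus (Cmult (RtoC s) (Cplus z (RtoC 1))) (RtoC 1))
               <= (rho + / rho) / 2).
  { eapply Rle_trans; [apply semi_axis_affine; exact hs | nra]. }
  assert (hexp : Cmod (cexp (Cmult (Cmult (alpha, beta) (RtoC s))
                                   (Cminus (RtoC 1) z)))
                 <= exp (alpha + / 2 * sqrt (alpha ^ 2 * (rho + / rho) ^ 2
                                             + beta ^ 2 * (rho - / rho) ^ 2))).
  { rewrite Cmod_cexp.
    replace (fst (Cmult (Cmult (alpha, beta) (RtoC s)) (Cminus (RtoC 1) z)))
      with (s * (alpha - (alpha * fst z - beta * snd z))) by (simpl; ring).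
    destruct (exponent_bound z rho s alpha beta hrho hs hz') as [hlt | heq];
      [left; apply exp_increasing, hlt | right; f_equal; exact heq]. }
  pose proof (cheb_series_bound psi K _ rho
                (fun k => chebT_bernstein_bound _ rho k hrho hw)) as hpsi.
  rewrite !Cmod_mult, Cmod_R, Rabs_pos_eq by lra.
  apply Rmult_le_compat; try apply Rmult_le_pos; try apply Cmod_ge_0; try lra.
  apply Rmult_le_compat_l; lra.
Qed.
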